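(* Let $q\in(0,1)$, let $a_n,b_n,c_n$ be the recurrence coefficients of the little $q$-Legendre polynomials and $P_1(x)=(x-b_0)/a_0=(q+1)x-q$. Let $K:=\left\lceil\frac{\log4}{\log\frac{1}{q}}-1\right\rceil$ and, for all $n,k\in\mathbb{N}_0$, \[A_n(k):=\frac{[b_{k+1}-P_1(1-q^n)][b_{k+2}-P_1(1-q^n)]}{a_{k+1}c_{k+2}},\qquad B_n(k):=\frac{[b_{n+k+1}-P_1(1-q^n)]q^k}{c_{n+k+1}}.\] Then $A_n(n+k)>4$ and $B_n(k)>\frac{1}{2q}$ for all $n\in\mathbb{N}_0$ and all $k\in\mathbb{N}_0$ with $k\ge K$. Moreover, $\lim_{k\to\infty}B_n(k)=\frac1q$ for every $n\in\mathbb{N}_0$.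
   Context: For $q\in(0,1)$ the recurrence coefficients are $a_0=\frac{1}{q+1}$, $b_0=\frac{q}{q+1}$, and for $n\ge1$: $a_n=q^n\frac{(1+q)(1-q^{n+1})}{(1-q^{2n+1})(1+q^{n+1})}$, $c_n=q^n\frac{(1+q)(1-q^n)}{(1-q^{2n+1})(1+q^n)}$, $b_n=\frac{(1-q^n)(1-q^{n+1})}{(1+q^n)(1+q^{n+1})}$. *)

From HB Require Import structures.
From mathcomp Require Import all_boot all_order all_algebra.
From mathcomp Require Import all_classical all_reals all_analysis.
Set Implicit Arguments. Unset Strict Implicit. Unset Printing Implicit Defensive.
Import Order.TTheory GRing.Theory Num.Theory.
Local Open Scope ring_scope.

Section LittleQLegendre.
Variable R : realType.
Variable q : R.

Definition qa (n : nat) : R :=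
  if n is 0%N then 1 / (q + 1)
  else q ^+ n * ((1 + q) * (1 - q ^+ n.+1))
       / ((1 - q ^+ (2 * n).+1) * (1 + q ^+ n.+1)).

Definition qb (n : nat) : R :=
  if n is 0%N then q / (q + 1)
  else ((1 - q ^+ n) * (1 - q ^+ n.+1)) / ((1 + q ^+ n) * (1 + q ^+ n.+1)).

(* c_n is only defined for n >= 1; c_0 (never used) is set to 0 *)
Definition qc (n : nat) : R :=
  if n is 0%N then 0
  else q ^+ n * ((1 + q) * (1 - q ^+ n))
       / ((1 - q ^+ (2 * n).+1) * (1 + q ^+ n)).

Definition P1 (x : R) : R := (x - qb 0) / qa 0.

Definition An (n k : nat) : R :=
  ((qb k.+1 - P1 (1 - q ^+ n)) * (qb k.+2 - P1 (1 - q ^+ n)))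
  / (qa k.+1 * qc k.+2).

Definition Bn (n k : nat) : R :=
  ((qb (n + k).+1 - P1 (1 - q ^+ n)) * q ^+ k) / qc (n + k).+1.

Definition Kq : int := Num.ceil (ln 4 / ln (1 / q) - 1).

End LittleQLegendre.

From HB Require Import structures.
From mathcomp Require Import all_boot all_order all_algebra.
From mathcomp Require Import all_classical all_reals all_analysis.
From mathcomp Require Import ring lra zify.
Import Order.TTheory GRing.Theory Num.Theory.
Import numFieldNormedType.Exports.
Local Open Scope classical_set_scope.
Local Open Scope ring_scope.

(* Put m = n + k + 1.  Since 1 - b_m = 2 (1 + q) q^m / ((1 + q^m) (1 + q^(m+1))),
   b_m - P_1(1 - q^n) = (1 + q) q^n X with X = 1 - 2 q^(k+1) / ((1 + q^m) (1 + q^(m+1))),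
   and a_m, c_m are q^m (1 + q) divided by a factor F = (1 - x) (1 + y) / (1 - y) with
   0 < x <= y < 1, so F > 1.  Hence B_n(k) = q^-1 X F and
   A_n(n+k) = (q (q^(k+1))^2)^-1 X X' F F'.  The condition k >= K says q^(k+1) <= 1/4,
   which gives X, X' >= 1/2 and (q (q^(k+1))^2)^-1 > 16; as k -> oo, X and F tend to 1. *)

Section LittleQLegendreBounds.
Context {R : realType}.
Implicit Types (q x y : R) (n k m : nat).

Definition qb_P1_factor q x y : R := 1 - 2 * x / ((1 + y) * (1 + q * y)).

Definition qac_factor x y : R := (1 - x) * (1 + y) / (1 - y).

Lemma qb_P1_factor_ge_half {q x y} : 0 <= q -> 0 <= x <= 1 / 4 -> 0 <= y ->
  1 / 2 <= qb_P1_factor q x y.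
Proof.
move=> q_ge0 /andP[x_ge0 x_le] y_ge0.
have D_ge1 : 1 <= (1 + y) * (1 + q * y) by nra.
have : 2 * x / ((1 + y) * (1 + q * y)) <= 2 * x.
  by rewrite ler_pdivrMr; nra.
rewrite /qb_P1_factor; lra.
Qed.

Lemma qac_factor_gt1 x y : 0 <= x <= y -> 0 < y < 1 -> 1 < qac_factor x y.
Proof.
move=> /andP[x_ge0 x_le_y] /andP[y_gt0 y_lt1].
by rewrite /qac_factor ltr_pdivlMr; nra.
Qed.

Lemma P1E q x : 0 < q -> P1 q x = (1 + q) * x - q.
Proof. by move=> q_gt0; rewrite /P1 /=; field; rewrite lt0r_neq0 //; lra. Qed.

Lemma qb_sub_P1 {q} n k : 0 < q ->
  qb q (n + k).+1 - P1 q (1 - q ^+ n) =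
  (1 + q) * q ^+ n * qb_P1_factor q (q ^+ k.+1) (q ^+ (n + k).+1).
Proof.
move=> q_gt0; rewrite P1E // /qb_P1_factor /= [q ^+ (n + k).+2]exprS -addnS exprD.
have := exprn_gt0 n q_gt0; have := exprn_gt0 k.+1 q_gt0.
move: (q ^+ n) (q ^+ k.+1) => u x x_gt0 u_gt0.
have ux_gt0 := mulr_gt0 u_gt0 x_gt0.
by field; rewrite !lt0r_neq0 //; nra.
Qed.

Lemma exprS_gt0_lt1 {q} m : 0 < q -> q < 1 -> 0 < q ^+ m.+1 < 1.
Proof. by move=> q_gt0 q_lt1; rewrite exprn_gt0 // exprn_ilt1 // ltW. Qed.

Lemma qa_succE q m : 0 < q -> q < 1 ->
  qa q m.+1 = q ^+ m.+1 * (1 + q) / qac_factor (q ^+ (2 * m.+1).+1) (q ^+ m.+2).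
Proof.
move=> q_gt0 q_lt1; rewrite /qa /qac_factor.
have /andP[x_gt0 x_lt1] := exprS_gt0_lt1 (2 * m.+1) q_gt0 q_lt1.
have /andP[y_gt0 y_lt1] := exprS_gt0_lt1 m.+1 q_gt0 q_lt1.
move: (q ^+ (2 * m.+1).+1) (q ^+ m.+2) x_gt0 x_lt1 y_gt0 y_lt1 => x y *.
by field; rewrite !lt0r_neq0 //; lra.
Qed.

Lemma qc_succE q m : 0 < q -> q < 1 ->
  qc q m.+1 = q ^+ m.+1 * (1 + q) / qac_factor (q ^+ (2 * m.+1).+1) (q ^+ m.+1).
Proof.
move=> q_gt0 q_lt1; rewrite /qc /qac_factor.
have /andP[x_gt0 x_lt1] := exprS_gt0_lt1 (2 * m.+1) q_gt0 q_lt1.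
have /andP[y_gt0 y_lt1] := exprS_gt0_lt1 m q_gt0 q_lt1.
move: (q ^+ (2 * m.+1).+1) (q ^+ m.+1) x_gt0 x_lt1 y_gt0 y_lt1 => x y *.
by field; rewrite !lt0r_neq0 //; lra.
Qed.

Lemma qac_factor_expr_gt1 {q} e m : 0 < q -> q < 1 -> (m < e)%N ->
  1 < qac_factor (q ^+ e) (q ^+ m.+1).
Proof.
move=> q_gt0 q_lt1 lt_me; apply: qac_factor_gt1; last exact: exprS_gt0_lt1.
have le_qX := ler_wiXn2l (ltW q_gt0) (ltW q_lt1) lt_me.
by rewrite le_qX exprn_ge0 // ltW.
Qed.

Lemma BnE q n k : 0 < q -> q < 1 ->
  Bn q n k = q^-1 * qb_P1_factor q (q ^+ k.+1) (q ^+ (n + k).+1)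
                  * qac_factor (q ^+ (2 * (n + k).+1).+1) (q ^+ (n + k).+1).
Proof.
move=> q_gt0 q_lt1; rewrite /Bn qb_sub_P1 // qc_succE //.
have F_gt1 := qac_factor_expr_gt1 (2 * (n + k).+1).+1 (n + k) q_gt0 q_lt1 ltac:(lia).
move: F_gt1; set F := qac_factor _ _; set X := qb_P1_factor _ _ _ => F_gt1.
clearbody F X; rewrite exprS exprD.
have := exprn_gt0 n q_gt0; have := exprn_gt0 k q_gt0.
move: (q ^+ n) (q ^+ k) => u v v_gt0 u_gt0.
by field; rewrite !lt0r_neq0 //; lra.
Qed.

Lemma AnE q n k : 0 < q -> q < 1 ->
  An q n (n + k) =
  (q * (q ^+ k.+1) ^+ 2)^-1
  * (qb_P1_factor q (q ^+ k.+1) (q ^+ (n + k).+1)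
     * qb_P1_factor q (q ^+ k.+2) (q ^+ (n + k).+2))
  * (qac_factor (q ^+ (2 * (n + k).+1).+1) (q ^+ (n + k).+2)
     * qac_factor (q ^+ (2 * (n + k).+2).+1) (q ^+ (n + k).+2)).
Proof.
move=> q_gt0 q_lt1; rewrite /An qb_sub_P1 //.
have := qb_sub_P1 n k.+1 q_gt0; rewrite addnS => ->.
rewrite qa_succE // qc_succE //.
have F1_gt1 := qac_factor_expr_gt1 (2 * (n + k).+1).+1 (n + k).+1 q_gt0 q_lt1 ltac:(lia).
have F2_gt1 := qac_factor_expr_gt1 (2 * (n + k).+2).+1 (n + k).+1 q_gt0 q_lt1 ltac:(lia).
move: F1_gt1 F2_gt1.
set F1 := qac_factor _ (q ^+ (n + k).+2); set F2 := qac_factor _ (q ^+ (n + k).+2).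
set X1 := qb_P1_factor _ _ _; set X2 := qb_P1_factor _ _ _ => F1_gt1 F2_gt1.
clearbody F1 F2 X1 X2.
rewrite [q ^+ (n + k).+2]exprS -addnS exprD.
have := exprn_gt0 n q_gt0; have := exprn_gt0 k.+1 q_gt0.
move: (q ^+ n) (q ^+ k.+1) => u s s_gt0 u_gt0.
by field; rewrite !lt0r_neq0 //; lra.
Qed.

Lemma Kq_le {q k} : 0 < q -> q < 1 -> Kq q <= k%:Z -> q ^+ k.+1 <= 1 / 4.
Proof.
move=> q_gt0 q_lt1; rewrite /Kq ceil_le_int.
have L_gt0 : 0 < ln (1 / q) by rewrite ln_gt0 // ltr_pdivlMr // mul1r.
rewrite lerBlDr ler_pdivrMr // -pmulrn natr1 mulr_natl -lnXn ?divr_gt0 //.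
rewrite ler_ln ?posrE ?exprn_gt0 ?divr_gt0 // expr_div_n expr1n.
by rewrite ler_pdivlMr ?exprn_gt0 // mulrC -ler_pdivlMr // mul1r.
Qed.

Lemma Bn_gt q n k : 0 < q -> q < 1 -> q ^+ k.+1 <= 1 / 4 -> 1 / (2 * q) < Bn q n k.
Proof.
move=> q_gt0 q_lt1 qk_le; rewrite BnE //.
have q_ge0 := ltW q_gt0.
have X_ge : 1 / 2 <= qb_P1_factor q (q ^+ k.+1) (q ^+ (n + k).+1).
  by apply: qb_P1_factor_ge_half; rewrite ?qk_le ?exprn_ge0.
have F_gt1 := qac_factor_expr_gt1 (2 * (n + k).+1).+1 (n + k) q_gt0 q_lt1 ltac:(lia).
have prod_gt (p X F : R) : 0 < p -> 1 / 2 <= X -> 1 < F -> p / 2 < p * X * F.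
  move=> p_gt0 X_half F_gt; have pX_ge : p / 2 <= p * X by nra.
  nra.
by rewrite mul1r invfM mulrC prod_gt ?invr_gt0.
Qed.

Lemma An_gt4 q n k : 0 < q -> q < 1 -> q ^+ k.+1 <= 1 / 4 -> 4 < An q n (n + k).
Proof.
move=> q_gt0 q_lt1 qk_le; rewrite AnE //.
have q_ge0 := ltW q_gt0.
have X1_ge : 1 / 2 <= qb_P1_factor q (q ^+ k.+1) (q ^+ (n + k).+1).
  by apply: qb_P1_factor_ge_half; rewrite ?qk_le ?exprn_ge0.
have X2_ge : 1 / 2 <= qb_P1_factor q (q ^+ k.+2) (q ^+ (n + k).+2).
  apply: qb_P1_factor_ge_half; rewrite ?exprn_ge0 //=.
  by rewrite (le_trans _ qk_le) // exprS ger_pMl ?exprn_gt0 // ltW.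
have F1_gt1 := qac_factor_expr_gt1 (2 * (n + k).+1).+1 (n + k).+1 q_gt0 q_lt1 ltac:(lia).
have F2_gt1 := qac_factor_expr_gt1 (2 * (n + k).+2).+1 (n + k).+1 q_gt0 q_lt1 ltac:(lia).
have P_gt16 : 16 < (q * (q ^+ k.+1) ^+ 2)^-1.
  have s_gt0 := exprn_gt0 k.+1 q_gt0.
  rewrite -[16]invrK ltf_pV2 ?posrE ?mulr_gt0 ?exprn_gt0 // expr2.
  have : q ^+ k.+1 * q ^+ k.+1 <= 1 / 16 by nra.
  nra.
have prod_gt4 (P X1 X2 F1 F2 : R) : 16 < P -> 1 / 2 <= X1 -> 1 / 2 <= X2 ->
    1 < F1 -> 1 < F2 -> 4 < P * (X1 * X2) * (F1 * F2).
  move=> P_gt X1_half X2_half F1_gt F2_gt.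
  have XX_ge : 1 / 4 <= X1 * X2 by nra.
  have FF_gt : 1 < F1 * F2 by nra.
  have PXX_gt : 4 < P * (X1 * X2) by nra.
  nra.
exact: prod_gt4.
Qed.

Lemma cvg_expr_ge {q} (e : nat -> nat) : 0 < q -> q < 1 -> (forall k, (k <= e k)%N) ->
  (fun k => q ^+ e k) @ \oo --> 0.
Proof.
move=> q_gt0 q_lt1 e_ge.
apply: (@squeeze_cvgr _ _ _ _ (cst 0) (fun k => q ^+ k)); last 2 first.
- exact: cvg_cst.
- by apply: cvg_expr; rewrite gtr0_norm.
near=> k; rewrite exprn_ge0 ?(ltW q_gt0) //=.
exact: ler_wiXn2l (ltW q_gt0) (ltW q_lt1) _ _ (e_ge k).
Unshelve. all: by end_near.
Qed.

Lemma cvg_qb_P1_factor q {x y : nat -> R} : x @ \oo --> 0 -> y @ \oo --> 0 ->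
  (fun k => qb_P1_factor q (x k) (y k)) @ \oo --> (1 : R).
Proof.
move=> x0 y0.
have D1 : (fun k => (1 + y k) * (1 + q * y k)) @ \oo --> (1 + 0) * (1 + q * 0).
  apply: cvgM; apply: cvgD => //.
  - exact: cvg_cst.
  - exact: cvg_cst.
  - exact: cvgMl_tmp.
have D0_neq0 : (1 + 0) * (1 + q * 0) != 0 :> R.
  by rewrite !(mulr0, addr0) mulr1 oner_neq0.
have L : (fun k => qb_P1_factor q (x k) (y k)) @ \oo
           --> 1 - 2 * 0 / ((1 + 0) * (1 + q * 0)).
  exact: cvgB (cvg_cst _) (cvgM (cvgM (cvg_cst (2 : R)) x0) (cvgV D0_neq0 D1)).
by rewrite mulr0 mul0r subr0 in L.
Qed.

Lemma cvg_qac_factor {x y : nat -> R} : x @ \oo --> 0 -> y @ \oo --> 0 ->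
  (fun k => qac_factor (x k) (y k)) @ \oo --> (1 : R).
Proof.
move=> x0 y0.
have one_sub0_neq0 : 1 - 0 != 0 :> R by rewrite subr0 oner_neq0.
have L : (fun k => qac_factor (x k) (y k)) @ \oo --> ((1 - 0) * (1 + 0) / (1 - 0) : R).
  exact: cvgM (cvgM (cvgB (cvg_cst _) x0) (cvgD (cvg_cst _) y0))
              (cvgV one_sub0_neq0 (cvgB (cvg_cst _) y0)).
by rewrite subr0 addr0 divr1 mulr1 in L.
Qed.

Lemma Bn_cvg q n : 0 < q -> q < 1 -> (fun k => Bn q n k) @ \oo --> q^-1.
Proof.
move=> q_gt0 q_lt1.
have L : (fun k => q^-1 * qb_P1_factor q (q ^+ k.+1) (q ^+ (n + k).+1)
                   * qac_factor (q ^+ (2 * (n + k).+1).+1) (q ^+ (n + k).+1))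
           @ \oo --> q^-1 * 1 * 1.
  apply: cvgM; first apply: cvgM; first exact: cvg_cst.
  - by apply: cvg_qb_P1_factor; apply: cvg_expr_ge => // k; lia.
  - by apply: cvg_qac_factor; apply: cvg_expr_ge => // k; lia.
rewrite !mulr1 in L.
by under eq_cvg do rewrite BnE //.
Qed.

End LittleQLegendreBounds.

Theorem lemma2p4 (R : realType) (q : R) (hq0 : 0 < q) (hq1 : q < 1) :
  (forall n k : nat, Kq q <= k%:Z ->
     4 < An q n (n + k) /\ 1 / (2 * q) < Bn q n k) /\
  (forall n : nat, (fun k : nat => Bn q n k) @ \oo --> q^-1).
Proof.
split=> [n k /(Kq_le hq0 hq1) qXk_le | n]; last exact: Bn_cvg.
by split; [apply: An_gt4 | apply: Bn_gt].
Qed.
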